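(* Define for $a\in[1,2]$ and $b>1$ the function $g(a,b)=x\,x_1+y\,y_1$, where $$x=\frac{\sqrt{a^2-1}\,(a^3-8)}{a^6},\quad x_1=(\sqrt{a^2-1}-\sqrt{b^2-1})^3+a^3,\quad y=\frac{\sqrt{b^2-1}\,(b^3-8)}{b^6},\quad y_1=(\sqrt{a^2-1}-\sqrt{b^2-1})^3+b^3.$$ Then $g(a,b)\neq 0$ for all $(a,b)\in[1,2]\times[5/2,\sqrt2(\sqrt3+1)]$. *)

From Stdlib Require Import Reals.
Open Scope R_scope.

Definition gx (a : R) : R := sqrt (a^2 - 1) * (a^3 - 8) / a^6.
Definition gy (b : R) : R := sqrt (b^2 - 1) * (b^3 - 8) / b^6.
Definition gx1 (a b : R) : R := (sqrt (a^2 - 1) - sqrt (b^2 - 1))^3 + a^3.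
Definition gy1 (a b : R) : R := (sqrt (a^2 - 1) - sqrt (b^2 - 1))^3 + b^3.
Definition g (a b : R) : R := gx a * gx1 a b + gy b * gy1 a b.

From Stdlib Require Import Reals Lra Psatz List.
Import ListNotations.
Open Scope R_scope.

(* With u = sqrt (a^2 - 1) and v = sqrt (b^2 - 1) we have gx a <= 0 <= gy b on
   the given ranges, and v >= 229/100, so the first summand of g is at least
   gx a * (a^3 - (229/100 - u)^3).  A cubic [separator u] separates the two
   summands: gx a * (a^3 - (229/100 - u)^3) + separator u > 0 for a in [1, 2],
   while separator u <= gy b * gy1 a b for every u in [0, sqrt 3], so g > 0.
   Both inequalities are checked by interval arithmetic on a partition of the
   range of a (resp. b) into boxes, each certified by rational enclosures of
   the square root at its endpoints. *)

Notation v_min := (229/100).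
Notation u_max := (17321/10000).

Definition separator (u : R) : R :=
  247/1000 + 1113/1000 * u - 501/1000 * u^2 + 7/100 * u^3.

Definition gk (t : R) : R := (t^3 - 8) / t^6.

Lemma gx_gk (a : R) : gx a = sqrt (a^2 - 1) * gk a.
Proof. unfold gx, gk, Rdiv; ring. Qed.

Lemma gy_gk (b : R) : gy b = sqrt (b^2 - 1) * gk b.
Proof. unfold gy, gk, Rdiv; ring. Qed.

Lemma sqrt_enclosure (x l h : R) :
  0 <= l -> l^2 <= x -> x <= h^2 -> 0 <= h -> l <= sqrt x <= h.
Proof.
  intros Hl Hlx Hxh Hh; split.
  - rewrite <- (sqrt_pow2 l Hl); now apply sqrt_le_1_alt.
  - rewrite <- (sqrt_pow2 h Hh); now apply sqrt_le_1_alt.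
Qed.

Lemma cube_le_compat (p q : R) : p <= q -> p^3 <= q^3.
Proof.
  intros Hpq.
  assert (0 <= q^2 + q*p + p^2) by nra.
  replace (q^3) with (p^3 + (q - p) * (q^2 + q*p + p^2)) by ring.
  nra.
Qed.

Lemma sqr_le_compat (p q : R) : 0 <= p <= q -> p^2 <= q^2.
Proof. intros Hpq; apply pow_incr; lra. Qed.

Lemma gk_le_0 (t : R) : 0 < t <= 2 -> gk t <= 0.
Proof.
  intros Ht; unfold gk, Rdiv.
  assert (t^3 <= 2^3) by (apply cube_le_compat; lra).
  assert (0 < / t^6) by (apply Rinv_0_lt_compat, pow_lt; lra).
  nra.
Qed.

(* On (0, 2], -gk t = (8 - t^3) * / t^6 is a product of nonnegative decreasing factors. *)
Lemma gk_le_increasing (s t : R) : 0 < s <= t -> t <= 2 -> gk s <= gk t.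
Proof.
  intros Hst Ht2; unfold gk, Rdiv.
  assert (Hts : t^3 - 8 >= s^3 - 8) by (apply Rle_ge, Rplus_le_compat_r, cube_le_compat; lra).
  assert (H8 : t^3 <= 2^3) by (apply cube_le_compat; lra).
  assert (Hinv : / t^6 <= / s^6)
    by (apply Rinv_le_contravar; [apply pow_lt; lra | apply pow_incr; lra]).
  assert (0 < / t^6) by (apply Rinv_0_lt_compat, pow_lt; lra).
  nra.
Qed.

Lemma gk_enclosure (s t r : R) : 2 <= s <= t -> t <= r ->
  (s^3 - 8) / r^6 <= gk t <= (r^3 - 8) / s^6.
Proof.
  intros Hst Htr; unfold gk, Rdiv.
  assert (s^3 <= t^3) by (apply cube_le_compat; lra).
  assert (t^3 <= r^3) by (apply cube_le_compat; lra).
  assert (2^3 <= s^3) by (apply cube_le_compat; lra).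
  assert (/ r^6 <= / t^6)
    by (apply Rinv_le_contravar; [apply pow_lt; lra | apply pow_incr; lra]).
  assert (/ t^6 <= / s^6)
    by (apply Rinv_le_contravar; [apply pow_lt; lra | apply pow_incr; lra]).
  assert (0 < / r^6) by (apply Rinv_0_lt_compat, pow_lt; lra).
  split; apply Rmult_le_compat; lra.
Qed.

Lemma bilinear_pos_of_corners (xl xh ml mh q x m : R) :
  xl <= x <= xh -> ml <= m <= mh ->
  0 < xl * ml + q -> 0 < xl * mh + q -> 0 < xh * ml + q -> 0 < xh * mh + q ->
  0 < x * m + q.
Proof.
  intros Hx Hm Hll Hlh Hhl Hhh.
  assert (Hxl : 0 < xl * m + q) by (destruct (Rle_dec 0 xl); nra).
  assert (Hxh : 0 < xh * m + q) by (destruct (Rle_dec 0 xh); nra).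
  destruct (Rle_dec 0 m); nra.
Qed.

Lemma concave_quadratic_nonneg (c0 c1 k U u : R) : k <= 0 -> 0 <= u <= U ->
  0 <= c0 -> 0 <= c0 + c1 * U + k * U^2 -> 0 <= c0 + c1 * u + k * u^2.
Proof.
  intros Hk Hu H0 HU.
  assert (Hid : U * (c0 + c1 * u + k * u^2)
                = (U - u) * c0 + u * (c0 + c1 * U + k * U^2) + (- k) * (u * (U * (U - u))))
    by ring.
  assert (0 <= (- k) * (u * (U * (U - u)))) by (apply Rmult_le_pos; [lra | apply Rmult_le_pos; nra]).
  destruct (Req_dec U 0) as [-> | HU0]; [replace u with 0 by lra; lra |].
  nra.
Qed.

Lemma cubic_nonneg_on (c0 c1 c2 c3 U u : R) : 0 <= u <= U -> 0 <= c0 ->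
  0 <= c0 + c1 * U -> 0 <= c0 + c1 * U + c2 * U^2 ->
  0 <= c0 + c1 * U + (c2 + c3 * U) * U^2 ->
  0 <= c0 + c1 * u + c2 * u^2 + c3 * u^3.
Proof.
  intros Hu H0 H1 H2 H3.
  assert (Hu2 : 0 <= u^2) by nra.
  (* reduce to a concave quadratic with leading coefficient min (0, c2, c2 + c3 U) *)
  assert (Hlow : exists k, k <= 0 /\ k * u^2 <= c2 * u^2 + c3 * u^3
                           /\ 0 <= c0 + c1 * U + k * U^2).
  { destruct (Rle_dec 0 c3).
    - assert (0 <= c3 * u^3) by (apply Rmult_le_pos; [lra | apply pow_le; lra]).
      destruct (Rle_dec c2 0); [exists c2 | exists 0]; repeat split; nra.
    - assert (0 <= (- c3) * ((U - u) * u^2)) by (apply Rmult_le_pos; nra).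
      destruct (Rle_dec (c2 + c3 * U) 0); [exists (c2 + c3 * U) | exists 0]; repeat split; nra. }
  destruct Hlow as [k [Hk [Hku HkU]]].
  pose proof (concave_quadratic_nonneg c0 c1 k U u Hk Hu H0 HkU).
  lra.
Qed.

Fixpoint covers {C : Type} (ok : R -> R -> C -> Prop) (lo hi : R)
  (l : list (R * C)) : Prop :=
  match l with
  | [] => False
  | (m, c) :: l' => ok lo m c /\ (hi <= m \/ covers ok m hi l')
  end.

Lemma covers_cons {C : Type} (ok : R -> R -> C -> Prop) lo hi m c l :
  ok lo m c -> covers ok m hi l -> covers ok lo hi ((m, c) :: l).
Proof. simpl; tauto. Qed.

Lemma covers_last {C : Type} (ok : R -> R -> C -> Prop) lo hi m c l :
  ok lo m c -> hi <= m -> covers ok lo hi ((m, c) :: l).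
Proof. simpl; tauto. Qed.

Lemma covers_sound {C : Type} (ok : R -> R -> C -> Prop) (P : R -> Prop) :
  (forall lo m c x, ok lo m c -> lo <= x <= m -> P x) ->
  forall l lo hi, covers ok lo hi l -> forall x, lo <= x <= hi -> P x.
Proof.
  intros Hok l; induction l as [| [m c] l IH]; simpl; [tauto |].
  intros lo hi [Hc Hrest] x Hx.
  destruct (Rle_dec x m) as [Hxm | Hxm]; [now apply (Hok lo m c) |].
  destruct Hrest as [Hhi | Hrest]; [lra |].
  apply (IH m hi Hrest); lra.
Qed.

Ltac prove_covers check :=
  repeat match goal with
  | |- covers _ _ _ [_] => apply covers_last; [check | lra]
  | |- covers _ _ _ (_ :: _) => apply covers_cons; [check |]
  end.

(* Certificate [(u0, u1)] for a in [a0, a1]: u0 <= sqrt (a^2 - 1) <= u1.  Then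
   gx a lies in [u1 * gk a0, u0 * gk a1], the second factor in [ml, mh], and
   [separator] is at least q; the bilinear product is checked at the corners. *)
Definition a_box_ok (a0 a1 : R) (c : R * R) : Prop :=
  let '(u0, u1) := c in
  let xl := u1 * gk a0 in
  let xh := u0 * gk a1 in
  let ml := a0^3 - (v_min - u0)^3 in
  let mh := a1^3 - (v_min - u1)^3 in
  let q := 247/1000 + 1113/1000 * u0 - 501/1000 * u1^2 + 7/100 * u0^3 in
  1 <= a0 /\ a1 <= 2 /\ 0 <= u0 /\ u0^2 <= a0^2 - 1 /\ a1^2 - 1 <= u1^2 /\ 0 <= u1 /\
  0 < xl * ml + q /\ 0 < xl * mh + q /\ 0 < xh * ml + q /\ 0 < xh * mh + q.

Lemma a_box_sound (a0 a1 : R) (c : R * R) (a : R) :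
  a_box_ok a0 a1 c -> a0 <= a <= a1 ->
  0 < gx a * (a^3 - (v_min - sqrt (a^2 - 1))^3) + separator (sqrt (a^2 - 1)).
Proof.
  destruct c as [u0 u1]; cbv beta iota zeta delta [a_box_ok].
  intros (Ha0 & Ha1 & Hu0 & Hu0a & Hu1a & Hu1 & Hll & Hlh & Hhl & Hhh) Ha.
  assert (Hu : u0 <= sqrt (a^2 - 1) <= u1).
  { apply sqrt_enclosure; try lra.
    - pose proof (sqr_le_compat a0 a ltac:(lra)); lra.
    - pose proof (sqr_le_compat a a1 ltac:(lra)); lra. }
  rewrite gx_gk.
  set (u := sqrt (a^2 - 1)) in *.
  assert (Hk0 : gk a0 <= gk a) by (apply gk_le_increasing; lra).
  assert (Hk1 : gk a <= gk a1) by (apply gk_le_increasing; lra).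
  assert (Hk : gk a <= 0) by (apply gk_le_0; lra).
  assert (Hk1' : gk a1 <= 0) by (apply gk_le_0; lra).
  assert (Hx : u1 * gk a0 <= u * gk a <= u0 * gk a1) by (split; nra).
  assert (Hm : a0^3 - (v_min - u0)^3 <= a^3 - (v_min - u)^3 <= a1^3 - (v_min - u1)^3).
  { pose proof (cube_le_compat a0 a ltac:(lra)).
    pose proof (cube_le_compat a a1 ltac:(lra)).
    pose proof (cube_le_compat (v_min - u) (v_min - u0) ltac:(lra)).
    pose proof (cube_le_compat (v_min - u1) (v_min - u) ltac:(lra)).
    lra. }
  assert (Hq : 247/1000 + 1113/1000 * u0 - 501/1000 * u1^2 + 7/100 * u0^3 <= separator u).
  { unfold separator.
    pose proof (cube_le_compat u0 u ltac:(lra)).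
    pose proof (sqr_le_compat u u1 ltac:(lra)).
    lra. }
  pose proof (bilinear_pos_of_corners _ _ _ _ _ _ _ Hx Hm Hll Hlh Hhl Hhh).
  lra.
Qed.

(* Certificate [(v0, v1)] for b in [b0, b1]: v0 <= sqrt (b^2 - 1) <= v1.  Then
   gy b lies in [yl, yh], and gy b * ((u - v)^3 + b^3) - separator u is a cubic
   in u whose coefficients are bounded below by c0, ..., c3. *)
Definition b_box_ok (b0 b1 : R) (c : R * R) : Prop :=
  let '(v0, v1) := c in
  let yl := v0 * ((b0^3 - 8) / b1^6) in
  let yh := v1 * ((b1^3 - 8) / b0^6) in
  let c0 := yl * (b0^3 - v1^3) - 247/1000 in
  let c1 := 3 * yl * v0^2 - 1113/1000 in
  let c2 := 501/1000 - 3 * yh * v1 in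
  let c3 := yl - 7/100 in
  2 <= b0 /\ 0 <= v0 /\ v0^2 <= b0^2 - 1 /\ b1^2 - 1 <= v1^2 /\ 0 <= v1 /\
  0 <= c0 /\ 0 <= c0 + c1 * u_max /\ 0 <= c0 + c1 * u_max + c2 * u_max^2 /\
  0 <= c0 + c1 * u_max + (c2 + c3 * u_max) * u_max^2.

Lemma b_box_sound (b0 b1 : R) (c : R * R) (b : R) :
  b_box_ok b0 b1 c -> b0 <= b <= b1 -> forall u, 0 <= u <= u_max ->
  separator u <= gy b * ((u - sqrt (b^2 - 1))^3 + b^3).
Proof.
  destruct c as [v0 v1]; cbv beta iota zeta delta [b_box_ok].
  intros (Hb0 & Hv0 & Hv0b & Hv1b & Hv1 & H0 & H1 & H2 & H3) Hb u Hu.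
  assert (Hv : v0 <= sqrt (b^2 - 1) <= v1).
  { apply sqrt_enclosure; try lra.
    - pose proof (sqr_le_compat b0 b ltac:(lra)); lra.
    - pose proof (sqr_le_compat b b1 ltac:(lra)); lra. }
  assert (Hvb : sqrt (b^2 - 1) <= b) by (apply (sqrt_enclosure _ v0); nra).
  rewrite gy_gk.
  set (v := sqrt (b^2 - 1)) in *.
  set (yl := v0 * ((b0^3 - 8) / b1^6)) in *.
  set (yh := v1 * ((b1^3 - 8) / b0^6)) in *.
  destruct (gk_enclosure b0 b b1 ltac:(lra) ltac:(lra)) as [Hk0 Hk1].
  assert (Hk : 0 <= (b0^3 - 8) / b1^6).
  { pose proof (cube_le_compat 2 b0 Hb0).
    apply Rmult_le_pos; [lra | apply Rlt_le, Rinv_0_lt_compat, pow_lt; lra]. }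
  assert (Hyl : 0 <= yl) by (apply Rmult_le_pos; lra).
  assert (Hy : yl <= v * gk b <= yh) by (split; apply Rmult_le_compat; lra).
  set (y := v * gk b) in *.
  assert (Hc0 : yl * (b0^3 - v1^3) <= y * (b^3 - v^3)).
  { pose proof (cube_le_compat b0 b ltac:(lra)).
    pose proof (cube_le_compat v v1 ltac:(lra)).
    pose proof (cube_le_compat v b Hvb).
    assert (0 <= (y - yl) * (b^3 - v^3)) by (apply Rmult_le_pos; lra).
    assert (0 <= yl * ((b^3 - v^3) - (b0^3 - v1^3))) by (apply Rmult_le_pos; lra).
    lra. }
  assert (Hc1 : yl * v0^2 <= y * v^2)
    by (apply Rmult_le_compat; try lra; [nra | apply sqr_le_compat; lra]).
  assert (Hc2 : y * v <= yh * v1) by (apply Rmult_le_compat; lra).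
  assert (Hcubic := cubic_nonneg_on _ _ _ _ _ u Hu H0 H1 H2 H3).
  assert (Hexp : y * ((u - v)^3 + b^3) - separator u
                 = (y * (b^3 - v^3) - 247/1000) + (3 * y * v^2 - 1113/1000) * u
                   + (501/1000 - 3 * y * v) * u^2 + (y - 7/100) * u^3)
    by (unfold separator; ring).
  assert (0 <= (y * (b^3 - v^3) - yl * (b0^3 - v1^3))
               + 3 * (y * v^2 - yl * v0^2) * u
               + 3 * (yh * v1 - y * v) * u^2 + (y - yl) * u^3).
  { assert (0 <= u^2) by nra. assert (0 <= u^3) by (apply pow_le; lra). nra. }
  lra.
Qed.
Definition a_boxes : list (R * (R * R)) := [
  (9/8, (0, 51539/100000));
  (5/4, (515387/1000000, 750001/1000000));
  (11/8, (749999/1000000, 943731/1000000));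
  (23/16, (58983/62500, 1032671/1000000));
  (47/32, (258167/250000, 537873/500000));
  (95/64, (1075743/1000000, 1096983/1000000));
  (3/2, (54849/50000, 223607/200000));
  (97/64, (69877/62500, 1138913/1000000));
  (49/32, (113891/100000, 9277/8000));
  (99/64, (579811/500000, 59009/50000));
  (25/16, (1180177/1000000, 1200587/1000000));
  (101/64, (150073/125000, 1220853/1000000));
  (51/32, (24417/20000, 248197/200000));
  (103/64, (620491/500000, 315247/250000));
  (13/8, (252197/200000, 128087/100000));
  (105/64, (1280867/1000000, 325159/250000));
  (53/32, (1300633/1000000, 1320291/1000000));
  (27/16, (41259/31250, 1359287/1000000));
  (55/32, (339821/250000, 1397893/1000000));
  (7/4, (139789/100000, 718071/500000));
  (29/16, (1436139/1000000, 60467/40000));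
  (15/8, (188959/125000, 793037/500000));
  (2, (1586071/1000000, 433013/250000))].

Definition b_boxes : list (R * (R * R)) := [
  (3206819/1280000, (1145643/500000, 2297101/1000000));
  (1606819/640000, (1148549/500000, 230291/100000));
  (3220457/1280000, (2302907/1000000, 2308717/1000000));
  (806819/320000, (1154357/500000, 2314521/1000000));
  (646819/256000, (1157259/500000, 2320323/1000000));
  (1620457/640000, (7251/3125, 2326123/1000000));
  (3247733/1280000, (58153/25000, 2331921/1000000));
  (406819/160000, (1165959/500000, 584429/250000));
  (326819/128000, (2337713/1000000, 23493/10000));
  (820457/320000, (2349297/1000000, 590219/250000));
  (1647733/640000, (2360873/1000000, 2372443/1000000));
  (206819/80000, (59311/25000, 2384001/1000000));
  (1661371/640000, (1191999/500000, 2395551/1000000));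
  (166819/64000, (598887/250000, 601773/250000));
  (1675009/640000, (2407089/1000000, 1209313/500000));
  (420457/160000, (2418623/1000000, 2430151/1000000));
  (1688647/640000, (607537/250000, 2441669/1000000));
  (847733/320000, (1220833/500000, 2453179/1000000));
  (340457/128000, (306647/125000, 2464681/1000000));
  (106819/40000, (1232339/500000, 99047/40000));
  (1715923/640000, (619043/250000, 1243831/500000));
  (861371/320000, (2487659/1000000, 1249571/500000));
  (86819/32000, (2499139/1000000, 15763/6250));
  (875009/320000, (2522077/1000000, 2544989/1000000));
  (220457/80000, (1272493/500000, 2567871/1000000));
  (888647/320000, (641967/250000, 103629/40000));
  (447733/160000, (1295361/500000, 1306777/500000));
  (180457/64000, (2613551/1000000, 1318179/500000));
  (56819/20000, (527271/200000, 41549/15625));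
  (915923/320000, (2659133/1000000, 2681891/1000000));
  (461371/160000, (83809/31250, 2704621/1000000));
  (929561/320000, (1352309/500000, 2727329/1000000));
  (46819/16000, (1363663/500000, 550003/200000));
  (943199/320000, (687503/250000, 2772679/1000000));
  (475009/160000, (693169/250000, 2795321/1000000));
  (956837/320000, (1397659/500000, 1408971/500000));
  (120457/40000, (2817939/1000000, 88767/31250));
  (38819/12800, (2840541/1000000, 4581/1600));
  (488647/160000, (1431561/500000, 2885687/1000000));
  (984113/320000, (721421/250000, 2908231/1000000));
  (247733/80000, (727057/250000, 586151/200000));
  (997751/320000, (45793/15625, 1476631/500000));
  (100457/32000, (2953259/1000000, 2975751/1000000));
  (1011389/320000, (743937/250000, 2998223/1000000));
  (31819/10000, (149911/50000, 1510339/500000));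
  (1025027/320000, (120827/40000, 3043117/1000000));
  (515923/160000, (1521557/500000, 3065539/1000000));
  (207733/64000, (47899/15625, 1543973/500000));
  (261371/80000, (3087943/1000000, 3110337/1000000));
  (1052303/320000, (1555167/500000, 3132713/1000000));
  (529561/160000, (313271/100000, 126203/40000));
  (1065941/320000, (49298/15625, 1588711/500000));
  (26819/8000, (3177419/1000000, 1599877/500000));
  (1079579/320000, (3199751/1000000, 3222073/1000000));
  (543199/160000, (322207/100000, 3244379/1000000));
  (1093217/320000, (405547/125000, 3266671/1000000));
  (275009/80000, (816667/250000, 65779/20000));
  (221371/64000, (3288947/1000000, 206951/62500));
  (556837/160000, (3311213/1000000, 333347/100000));
  (1120493/320000, (3333467/1000000, 3355711/1000000));
  (70457/20000, (838927/250000, 3377941/1000000));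
  (1134131/320000, (1688969/500000, 1700079/500000));
  (22819/6400, (680031/200000, 855591/250000));
  (1147769/320000, (3422361/1000000, 3444559/1000000));
  (288647/80000, (861139/250000, 3466743/1000000));
  (1161407/320000, (173337/50000, 872229/250000));
  (584113/160000, (3488913/1000000, 1755539/500000));
  (235009/64000, (140443/40000, 3533229/1000000));
  (147733/40000, (1766613/500000, 3555371/1000000));
  (1188683/320000, (444421/125000, 1788751/500000));
  (597751/160000, (3577499/1000000, 3599623/1000000));
  (1202321/320000, (179981/50000, 724347/200000));
  (60457/16000, (905433/250000, 3643837/1000000));
  (1215959/320000, (1821917/500000, 3665929/1000000));
  (611389/160000, (1832963/500000, 3688013/1000000));
  (1229597/320000, (368801/100000, 3710087/1000000));
  (19319/5000, (927521/250000, 466519/125000))].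

Ltac check_box box_ok := cbv beta iota zeta delta [box_ok gk]; repeat split; lra.

Lemma a_boxes_cover : covers a_box_ok 1 2 a_boxes.
Proof. unfold a_boxes; prove_covers ltac:(check_box a_box_ok). Qed.

Lemma b_boxes_cover : covers b_box_ok (5/2) (19319/5000) b_boxes.
Proof. unfold b_boxes; prove_covers ltac:(check_box b_box_ok). Qed.

Lemma gx_side_pos (a : R) : 1 <= a <= 2 ->
  0 < gx a * (a^3 - (v_min - sqrt (a^2 - 1))^3) + separator (sqrt (a^2 - 1)).
Proof.
  exact (covers_sound a_box_ok _ a_box_sound a_boxes 1 2 a_boxes_cover a).
Qed.

Lemma gy_side_ge (b : R) : 5/2 <= b <= 19319/5000 -> forall u, 0 <= u <= u_max ->
  separator u <= gy b * ((u - sqrt (b^2 - 1))^3 + b^3).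
Proof.
  exact (covers_sound b_box_ok _ b_box_sound b_boxes _ _ b_boxes_cover b).
Qed.

Lemma sqrt2_mul_sqrt3_add1_le : sqrt 2 * (sqrt 3 + 1) <= 19319/5000.
Proof.
  destruct (sqrt_enclosure 2 0 (141422/100000)) as [H2 H2']; try lra.
  destruct (sqrt_enclosure 3 0 (173206/100000)) as [H3 H3']; try lra.
  assert (sqrt 2 * (sqrt 3 + 1) <= 141422/100000 * (173206/100000 + 1))
    by (apply Rmult_le_compat; lra).
  lra.
Qed.

Theorem lemma5 : forall a b : R,
  1 <= a <= 2 -> 5 / 2 <= b <= sqrt 2 * (sqrt 3 + 1) -> g a b <> 0.
Proof.
  intros a b Ha Hb.
  pose proof sqrt2_mul_sqrt3_add1_le.
  assert (Hu : 0 <= sqrt (a^2 - 1) <= u_max) by (apply sqrt_enclosure; nra).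
  assert (Hv : v_min <= sqrt (b^2 - 1)) by (apply (sqrt_enclosure _ _ 4); nra).
  pose proof (gx_side_pos a Ha) as Hgx.
  pose proof (gy_side_ge b ltac:(lra) _ Hu) as Hgy.
  assert (Hx : gx a <= 0).
  { rewrite gx_gk. pose proof (gk_le_0 a ltac:(lra)). nra. }
  unfold g, gx1, gy1.
  set (u := sqrt (a^2 - 1)) in *; set (v := sqrt (b^2 - 1)) in *.
  assert (gx a * (a^3 - (v_min - u)^3) <= gx a * ((u - v)^3 + a^3)).
  { pose proof (cube_le_compat (u - v) (u - v_min) ltac:(lra)).
    apply Rmult_le_compat_neg_l; [lra |].
    replace ((u - v_min)^3) with (- (v_min - u)^3) in * by ring.
    lra. }
  lra.
Qed.
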